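(* Let $p$ be an odd prime, $t,s$ positive integers, $r=p^t$, $q=r^s$, $T=q+1$, and let $\chi(x)=\zeta_p^{\mathrm{Tr}_{q^2/p}(x)}$ ($\zeta_p=e^{2\pi i/p}$) be the canonical additive character of $\mathbb{F}_{q^2}$. For $a\in\mathbb{F}_{q^2}^*$ let $$P=\sum_{x\in\mathbb{F}_{q^2},\ \mathrm{Tr}_{q/r}(x^T)=0}\chi(ax).$$ Then $P=-\frac{q}{r}(r-1)$ if $\mathrm{Tr}_{q/r}(a^T)=0$, and $P=\frac{q}{r}$ if $\mathrm{Tr}_{q/r}(a^T)\neq0$.
   Context: $\mathrm{Tr}_{q/r}$ is the trace from $\mathbb{F}_q$ to $\mathbb{F}_r$ and $\mathrm{Tr}_{q^2/p}$ the absolute trace of $\mathbb{F}_{q^2}$; note $x^{q+1}\in\mathbb{F}_q$ for $x\in\mathbb{F}_{q^2}$. *)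

From HB Require Import structures.
From mathcomp Require Import all_boot all_order all_algebra all_field.
Set Implicit Arguments. Unset Strict Implicit. Unset Printing Implicit Defensive.
Import GRing.Theory Num.Theory.
Local Open Scope ring_scope.

Definition relTr (F : fieldType) (r s : nat) (y : F) : F :=
  \sum_(i < s) y ^+ (r ^ i).

Definition absTr (F : fieldType) (p n : nat) (x : F) : F :=
  \sum_(i < n) x ^+ (p ^ i).

(* Canonical additive character chi(x) = zeta^{Tr(x)}, where the trace
   Tr(x) in the prime field F_p is identified with the unique k in {0..p-1}
   with k%:R = Tr(x). *)
Definition addChar (F : fieldType) (p n : nat) (zeta : algC) (x : F) : algC :=
  oapp (fun k : 'I_p => zeta ^+ k) 0
    [pick k : 'I_p | (k%:R : F) == absTr p n x].

From HB Require Import structures.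
From mathcomp Require Import all_boot all_order all_algebra all_field.
From mathcomp Require Import zify ring.
Set Implicit Arguments.
Unset Strict Implicit.
Unset Printing Implicit Defensive.

Import GRing.Theory Num.Theory.
Local Open Scope ring_scope.

(* Write N x = x ^+ q.+1 and chi for the canonical character.  For y in F_q
   and c in F_r, Tr (c y) = Tr_{r/p} (2 c Tr_{q/r} y), so the sum of chi (c y)
   over c in F_r is r or 0 according as Tr_{q/r} y vanishes.  Hence
   r P = sum_{c in F_r} sum_x chi (a x) chi (c N x).  The term c = 0 vanishes;
   for c != 0 the shift x |-> x + a^q / (2c) completes the square and turns the
   inner sum into chi (- N a / (4c)) times sum_x chi (c N x) = - q.  Finally the
   sum of chi (- N a / (4c)) over c in F_r^* is r [Tr_{q/r} (N a) = 0] - 1. *)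

Lemma expr_fixed_expn (R : ringType) (x : R) m i : x ^+ m = x -> x ^+ (m ^ i) = x.
Proof.
move=> xm; elim: i => [|i IHi]; first by rewrite expn0 expr1.
by rewrite expnSr exprM IHi xm.
Qed.

Section FrobeniusPowers.
Variables (F : fieldType) (p : nat).
Hypothesis pcharFp : p \in [pchar F].

Lemma pchar_nat : [pchar F].-nat p.
Proof. by rewrite (eq_pnat _ (pcharf_eq pcharFp)) pnat_id ?(pcharf_prime pcharFp). Qed.

Lemma pchar_natX k : [pchar F].-nat (p ^ k)%N.
Proof. by rewrite pnatX pchar_nat. Qed.

Lemma expr_sum_pchar e (I : Type) (rs : seq I) (P : pred I) (f : I -> F) :
  [pchar F].-nat e -> (\sum_(i <- rs | P i) f i) ^+ e = \sum_(i <- rs | P i) f i ^+ e.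
Proof.
move=> e_pchar; have /andP[e_gt0 _] := e_pchar.
apply: (big_morph (fun x : F => x ^+ e)) => [x y|]; first exact: exprDn_pchar.
by rewrite expr0n gtn_eqF.
Qed.

Lemma natr_fixed k j : (k%:R : F) ^+ (p ^ j) = k%:R.
Proof. by apply: expr_fixed_expn; rewrite -(pFrobenius_autE pcharFp) pFrobenius_aut_nat. Qed.

Lemma natr_inj_pchar (k k' : nat) :
  (k < p)%N -> (k' < p)%N -> (k%:R : F) = k'%:R -> k = k'.
Proof.
wlog le_kk' : k k' / (k <= k')%N.
  move=> W kp k'p eqk; case: (leqP k k') => [|/ltnW] le; first exact: W.
  by symmetry; apply: W.
move=> _ k'p eqk; apply/eqP; rewrite eqn_leq le_kk' -subn_eq0 /=.
have : (p %| k' - k)%N by rewrite (dvdn_pcharf pcharFp) natrB // eqk subrr.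
by rewrite /dvdn modn_small // (leq_ltn_trans (leq_subr _ _)).
Qed.

Lemma frobenius_fixed_nat (z : F) : z ^+ p = z -> exists k : 'I_p, k%:R = z.
Proof.
move=> zp; case: (pickP [pred k : 'I_p | k%:R == z]) => [k /eqP | not_nat]; first by exists k.
have p_gt1 : (1 < p)%N by rewrite prime_gt1 ?(pcharf_prime pcharFp).
have size_Xp : size ('X^p - 'X : {poly F}) = p.+1.
  by rewrite size_polyDl ?size_polyXn // size_polyN size_polyX.
have Xp_neq0 : 'X^p - 'X != 0 :> {poly F} by rewrite -size_poly_eq0 size_Xp.
pose rs := z :: [seq ((val k)%:R : F) | k : 'I_p].
have rs_roots : all (root ('X^p - 'X)) rs.
  rewrite /= /root !hornerE zp subrr eqxx; apply/allP => _ /mapP[k _ ->].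
  by rewrite !hornerE -(pFrobenius_autE pcharFp) pFrobenius_aut_nat subrr.
have rs_uniq : uniq rs.
  rewrite /= map_inj_uniq ?enum_uniq ?andbT; last first.
    by move=> k k' /natr_inj_pchar eqk; apply/val_inj/eqk.
  by apply/mapP => -[k _ kz]; have := not_nat k; rewrite /= -kz eqxx.
have := max_poly_roots Xp_neq0 rs_roots rs_uniq.
by rewrite /= size_map size_enum_ord size_Xp ltnn.
Qed.

End FrobeniusPowers.

Section RelativeTrace.
Variable F : fieldType.
Implicit Types x y c : F.

Lemma relTr1 m y : relTr m 1 y = y.
Proof. by rewrite /relTr big_ord1 expn0 expr1. Qed.

Lemma relTr_addn m k l y :
  relTr m (k + l) y = relTr m k y + relTr m l (y ^+ (m ^ k)).
Proof.
rewrite /relTr big_split_ord; congr (_ + _).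
by apply: eq_bigr => i _; rewrite -exprM -expnD.
Qed.

Variable m : nat.

Lemma relTrZ k c y : c ^+ m = c -> relTr m k (c * y) = c * relTr m k y.
Proof.
move=> cm; rewrite /relTr mulr_sumr; apply: eq_bigr => i _.
by rewrite exprMn expr_fixed_expn.
Qed.

Section FixedPoint.
Variables (k : nat) (y : F).
Hypothesis y_fixed : y ^+ (m ^ k) = y.

Lemma relTr_expr_fixed : relTr m k (y ^+ m) = relTr m k y.
Proof.
apply: (@addrI _ y); rewrite -{1}[y](relTr1 m) -relTr_addn addnC relTr_addn y_fixed.
by rewrite relTr1 addrC.
Qed.

Lemma relTr_mulnl j : relTr m (j * k) y = relTr m k y *+ j.
Proof.
elim: j => [|j IHj]; first by rewrite mul0n /relTr big_ord0.
by rewrite mulSn relTr_addn y_fixed IHj mulrS.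
Qed.

End FixedPoint.

Hypothesis m_pchar : [pchar F].-nat m.

Lemma relTrD k : {morph @relTr F m k : x y / x + y}.
Proof.
move=> x y; rewrite /relTr -big_split; apply: eq_bigr => i _.
by apply: exprDn_pchar; rewrite pnatX m_pchar.
Qed.

Lemma relTr0 k : relTr m k (0 : F) = 0.
Proof. by apply: (@addrI _ (relTr m k 0)); rewrite -relTrD !addr0. Qed.

Lemma relTr_tower a b x : relTr m (a * b) x = relTr m a (relTr (m ^ a) b x).
Proof.
elim: b => [|b IHb]; first by rewrite muln0 /relTr !big_ord0 -/(relTr m a 0) relTr0.
by rewrite mulnSr relTr_addn IHb -addn1 (relTr_addn (m ^ a)) relTr1 relTrD -expnM.
Qed.

Lemma relTr_expr k y : relTr m k y ^+ m = relTr m k (y ^+ m).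
Proof.
rewrite /relTr expr_sum_pchar //; apply: eq_bigr => i _.
by rewrite -!exprM mulnC.
Qed.

Lemma relTr_fixed k y : y ^+ (m ^ k) = y -> relTr m k y ^+ m = relTr m k y.
Proof. by move=> y_fixed; rewrite relTr_expr relTr_expr_fixed. Qed.

End RelativeTrace.

Section FiniteFieldCounting.
Variable F : finFieldType.
Implicit Types x y z c : F.

Lemma card_roots_lt [P : {poly F}] : P != 0 -> (#|[pred x | root P x]| < size P)%N.
Proof.
move=> P_neq0; rewrite cardE; apply: max_poly_roots => //; last exact: enum_uniq.
by apply/allP => x; rewrite mem_enum.
Qed.

Lemma relTr_neq0 m k : (1 < m)%N -> (0 < k)%N -> (m ^ k.-1 < #|F|)%N ->
  exists x : F, relTr m k x != 0.
Proof.
move=> m_gt1 k_gt0 mk_lt; apply/existsP; apply: contraLR mk_lt.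
rewrite negb_exists -leqNgt => /forallP /= trF0.
pose Q : {poly F} := \sum_(i < k) 'X^(m ^ i).
have Q_horner x : Q.[x] = relTr m k x.
  by rewrite horner_sum; apply: eq_bigr => i _; rewrite hornerXn.
have top : (k.-1 < k)%N by rewrite prednK.
have Q_neq0 : Q != 0.
  apply/eqP => /(congr1 (fun P : {poly F} => P`_(m ^ k.-1))).
  rewrite coef0 coef_sum (bigD1 (Ordinal top)) //= coefXn eqxx big1 ?addr0.
    by move/eqP; rewrite oner_eq0.
  move=> i /= ne_i; rewrite coefXn eqn_exp2l // -val_eqE /= eq_sym in ne_i *.
  by rewrite (negbTE ne_i).
have size_Q : (size Q <= (m ^ k.-1).+1)%N.
  apply: leq_trans (size_sum _ _ _) _; apply/bigmax_leqP => i _.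
  by rewrite size_polyXn ltnS leq_exp2l // -ltnS prednK.
rewrite -ltnS; apply: leq_trans size_Q; apply: leq_ltn_trans (card_roots_lt Q_neq0).
apply: subset_leq_card; apply/subsetP => x _.
by rewrite inE /root Q_horner (negPn (trF0 x)).
Qed.

Lemma unity_root_neq0 e z : (0 < e)%N -> z ^+ e == 1 -> z != 0.
Proof.
move=> e_gt0; apply: contraTneq => ->.
by rewrite -(prednK e_gt0) exprS mul0r eq_sym oner_eq0.
Qed.

Lemma expr_card_pred x : x != 0 -> x ^+ #|F|.-1 = 1.
Proof.
move=> x_neq0; apply: (mulfI x_neq0).
by rewrite -exprS prednK ?expf_card ?mulr1 // (ltnW (finNzRing_gt1 F)).
Qed.

Lemma card_expr_fiber_le d z : (0 < d)%N -> (#|[pred x | x ^+ d == z]| <= d)%N.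
Proof.
move=> d_gt0; have := @card_roots_lt ('X^d - z%:P).
rewrite size_XnsubC // -size_poly_eq0 size_XnsubC // ltnS => /(_ isT).
apply: leq_trans; apply: subset_leq_card; apply/subsetP => x.
by rewrite !inE /root !hornerE subr_eq0.
Qed.

Section PowerMap.
Variables e d : nat.
Hypothesis ed : (e * d)%N = #|F|.-1.

Let d_gt0 : (0 < d)%N.
Proof. by move: (finNzRing_gt1 F); rewrite -ltn_predRL -ed muln_gt0 => /andP[]. Qed.

Let e_gt0 : (0 < e)%N.
Proof. by move: (finNzRing_gt1 F); rewrite -ltn_predRL -ed muln_gt0 => /andP[]. Qed.

Lemma sum_card_expr_fiber :
  (\sum_(z : F | z ^+ e == 1%R) #|[pred x | x ^+ d == z]|)%N = #|F|.-1.
Proof.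
rewrite -(cardC1 (0 : F)) -sum1_card.
rewrite [RHS](partition_big (fun x => x ^+ d) (fun z => z ^+ e == 1)).
  apply: eq_bigr => z ze1; rewrite -sum1_card; apply: eq_bigl => x /=.
  rewrite !inE; apply/esym/andb_idl => /eqP xdz.
  by move: (unity_root_neq0 e_gt0 ze1); rewrite -xdz expf_eq0 d_gt0.
by move=> x /= x_neq0; rewrite -exprM mulnC ed expr_card_pred.
Qed.

Lemma card_unity_roots_expr_fiber :
  #|[pred z : F | z ^+ e == 1]| = e /\
  forall z : F, z ^+ e == 1 -> #|[pred x | x ^+ d == z]| = d.
Proof.
have card_le : (#|[pred z : F | z ^+ e == 1%R]| <= e)%N.
  rewrite cardE; apply: max_unity_roots => //; last exact: enum_uniq.
  by apply/allP => z; rewrite mem_enum unity_rootE.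
have card_eq : #|[pred z : F | z ^+ e == 1]| = e.
  apply/eqP; rewrite eqn_leq card_le -(leq_pmul2r d_gt0) ed -{1}sum_card_expr_fiber.
  by rewrite -sum_nat_const leq_sum // => z _; exact: card_expr_fiber_le.
split=> // z ze1; apply/eqP; rewrite eqn_leq card_expr_fiber_le //=.
have : (\sum_(y : F | y ^+ e == 1%R) (d - #|[pred x | x ^+ d == y]|) == 0)%N.
  rewrite sumnB => [|y _]; last exact: card_expr_fiber_le.
  by rewrite sum_card_expr_fiber sum_nat_const card_eq ed subnn.
by rewrite sum_nat_eq0 => /forallP /(_ z) /implyP /(_ ze1); rewrite subn_eq0.
Qed.

End PowerMap.

Lemma expr_fixed_neq0 m c : (1 < m)%N ->
  (c ^+ m == c) && (c != 0) = (c ^+ m.-1 == 1).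
Proof.
move=> m_gt1; have [->|c_neq0] := eqVneq c 0.
  by case: m m_gt1 => [|[|m]] // _; rewrite andbF exprS mul0r eq_sym oner_eq0.
rewrite andbT -{1}(prednK (ltnW m_gt1)) exprSr -{3}[c]mul1r.
by rewrite (inj_eq (mulIf c_neq0)).
Qed.

Lemma card_expr_fixed m : (1 < m)%N -> (m.-1 %| #|F|.-1)%N ->
  #|[pred c : F | c ^+ m == c]| = m.
Proof.
move=> m_gt1 dvd_m; have m_gt0 := ltnW m_gt1.
have ed : (m.-1 * (#|F|.-1 %/ m.-1))%N = #|F|.-1 by rewrite mulnC divnK.
have [card_roots _] := card_unity_roots_expr_fiber ed.
rewrite (cardD1 0) inE expr0n gtn_eqF ?eqxx //= -{2}(prednK m_gt0) -card_roots add1n.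
by congr _.+1; apply: eq_card => c; rewrite !inE andbC expr_fixed_neq0.
Qed.

End FiniteFieldCounting.

Section AdditiveCharacter.
Variables (F : finFieldType) (p n : nat) (zeta : algC).
Hypotheses (pcharFp : p \in [pchar F]) (cardF : #|F| = (p ^ n)%N) (n_gt0 : (0 < n)%N).
Hypothesis zeta_prim : p.-primitive_root zeta.
Implicit Types x y b c : F.

(* [addChar] is stated with [absTr p n], which unfolds to [relTr p n]. *)
Local Notation tr := (relTr p n).
Local Notation chi := (addChar p n zeta).

Let p_prime : prime p := pcharf_prime pcharFp.
Let p_gt0 : (0 < p)%N := prime_gt0 p_prime.

Lemma relTr_expr_char x : tr (x ^+ p) = tr x.
Proof. by apply: relTr_expr_fixed; rewrite -cardF expf_card. Qed.

Lemma relTr_exprXn_char j x : tr (x ^+ (p ^ j)) = tr x.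
Proof.
elim: j => [|j IHj]; first by rewrite expn0 expr1.
by rewrite expnSr exprM relTr_expr_char IHj.
Qed.

Lemma relTr_char_nat x : exists k : 'I_p, k%:R = tr x.
Proof.
apply: (frobenius_fixed_nat pcharFp); apply: (relTr_fixed (pchar_nat pcharFp)).
by rewrite -cardF expf_card.
Qed.

Lemma addCharE x k : k%:R = tr x -> chi x = zeta ^+ k.
Proof.
move=> kx; rewrite /addChar; case: pickP => [k' /eqP k'x | no_k] /=.
  rewrite -(prim_expr_mod zeta_prim k); congr (_ ^+ _).
  apply: (natr_inj_pchar pcharFp) => //; first by rewrite ltn_pmod.
  by rewrite (GRing.natr_mod_pchar pcharFp) kx k'x.
have := no_k (Ordinal (ltn_pmod k p_gt0)).
by rewrite /= (GRing.natr_mod_pchar pcharFp) kx eqxx.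
Qed.

Lemma addChar_tr0 x : tr x = 0 -> chi x = 1.
Proof. by move=> tr_x0; rewrite (@addCharE x 0) ?expr0 ?tr_x0. Qed.

Lemma addChar0 : chi (0 : F) = 1.
Proof. by rewrite addChar_tr0 ?relTr0 ?(pchar_nat pcharFp). Qed.

Lemma addCharD : {morph @addChar F p n zeta : x y / x + y >-> x * y}.
Proof.
move=> x y; have [k kx] := relTr_char_nat x; have [l ly] := relTr_char_nat y.
rewrite (addCharE kx) (addCharE ly) -exprD (@addCharE _ (k + l)) //.
by rewrite natrD kx ly relTrD ?(pchar_nat pcharFp).
Qed.

Lemma addChar_neq1 x : tr x != 0 -> chi x != 1.
Proof.
have [k kx] := relTr_char_nat x; rewrite (addCharE kx) -kx => k_neq0.
rewrite -(prim_order_dvd zeta_prim); apply: contraNN k_neq0 => /dvdn_leq.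
by case: (nat_of_ord k) (ltn_ord k) => // k' k'p /(_ isT); rewrite leqNgt k'p.
Qed.

Lemma addChar_exprXn_char j x : chi (x ^+ (p ^ j)) = chi x.
Proof.
have [k kx] := relTr_char_nat x.
by rewrite (addCharE kx) (addCharE (etrans kx (esym (relTr_exprXn_char j x)))).
Qed.

Lemma relTr_char_neq0 : exists x, tr x != 0.
Proof.
apply: relTr_neq0 => //; first by rewrite prime_gt1.
by rewrite cardF ltn_exp2l ?prime_gt1 // prednK.
Qed.

(* Translating the summation variable by c0 multiplies the sum by chi (b * c0) != 1. *)
Lemma sum_addChar_mul_eq0 (V : pred F) b c0 :
  (forall c, V (c + c0) = V c) -> tr (b * c0) != 0 -> \sum_(c | V c) chi (b * c) = 0.
Proof.
move=> V_inv trbc0; set S := \sum_(c | V c) _.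
have S_shift : S = chi (b * c0) * S.
  rewrite {1}/S (reindex_inj (addIr c0)) /= mulr_sumr.
  by apply: eq_big => [c|c _]; rewrite ?V_inv // mulrDr addCharD mulrC.
apply/eqP; move: S_shift => /eqP; rewrite -subr_eq0 -{1}[S]mul1r -mulrBl mulf_eq0.
by rewrite subr_eq0 eq_sym (negbTE (addChar_neq1 trbc0)).
Qed.

End AdditiveCharacter.

Section NormTraceSum.
Variables (p t s : nat) (F : finFieldType) (zeta : algC).
Hypotheses (p_odd : odd p) (t_gt0 : (0 < t)%N) (s_gt0 : (0 < s)%N).
Hypotheses (pcharFp : p \in [pchar F]) (cardF : #|F| = ((p ^ (t * s)) ^ 2)%N).
Hypothesis zeta_prim : p.-primitive_root zeta.
Implicit Types a b c w x y : F.

Local Notation r := (p ^ t)%N.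
Local Notation q := (r ^ s)%N.
Local Notation n := (2 * (t * s))%N.
Local Notation tr := (relTr p n).
Local Notation trq := (relTr r s).
Local Notation chi := (addChar p n zeta).

Let p_prime : prime p := pcharf_prime pcharFp.
Let r_pchar : [pchar F].-nat r := pchar_natX pcharFp t.
Let q_pchar : [pchar F].-nat q.
Proof. by rewrite -expnM pchar_natX. Qed.

Let cardF_pn : #|F| = (p ^ n)%N.
Proof. by rewrite cardF -expnM mulnC. Qed.

Let n_gt0 : (0 < n)%N.
Proof. by rewrite !muln_gt0 t_gt0 s_gt0. Qed.

Let r_gt1 : (1 < r)%N.
Proof. by rewrite -(exp1n t) ltn_exp2r ?prime_gt1. Qed.

Let q_gt1 : (1 < q)%N.
Proof. by rewrite -(exp1n s) ltn_exp2r. Qed.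

Let cardF_qq : #|F| = (q * q)%N.
Proof. by rewrite cardF -mulnn expnM. Qed.

Let tr_neq0 := relTr_char_neq0 pcharFp cardF_pn n_gt0.
Let chi_tr0 := addChar_tr0 (n := n) pcharFp zeta_prim.
Let chi0 : chi 0 = 1 := addChar0 n pcharFp zeta_prim.
Let chiD := addCharD pcharFp cardF_pn zeta_prim.
Let sum_chi_mul_eq0 := sum_addChar_mul_eq0 pcharFp cardF_pn zeta_prim.

Lemma expr_q_qE x : x ^+ q ^+ q = x.
Proof. by rewrite -exprM -cardF_qq expf_card. Qed.

Lemma exprDq x y : (x + y) ^+ q = x ^+ q + y ^+ q.
Proof. exact: exprDn_pchar. Qed.

Lemma norm_fixed x : x ^+ q.+1 ^+ q = x ^+ q.+1.
Proof. by rewrite exprSr exprMn expr_q_qE mulrC. Qed.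

Lemma two_neq0 : (2%:R : F) != 0.
Proof.
rewrite -(dvdn_pcharf pcharFp); apply: contraL p_odd => /(dvdn_leq (ltn0Sn 1)) p_le2.
by have /eqP -> : p == 2%N by rewrite eqn_leq p_le2 prime_gt1.
Qed.

Lemma four_neq0 : (4%:R : F) != 0.
Proof. by rewrite (natrM F 2 2) mulf_neq0 ?two_neq0. Qed.

Lemma tr_mul_Fr_Fq c y : c ^+ r = c -> y ^+ q = y ->
  tr (c * y) = relTr p t (c * (trq y *+ 2)).
Proof.
move=> c_fixed y_fixed; rewrite mulnCA relTr_tower ?(pchar_nat pcharFp) //.
by rewrite relTrZ // relTr_mulnl.
Qed.

Lemma sum_chi_Fr y : y ^+ q = y ->
  \sum_(c | c ^+ r == c) chi (c * y) = if trq y == 0 then r%:R else 0.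
Proof.
move=> y_fixed; case: eqP => [trq_y0 | /eqP trq_y_neq0].
  transitivity (\sum_(c in [pred c : F | c ^+ r == c]) (1 : algC)).
    apply: eq_bigr => c /eqP c_fixed; apply: chi_tr0.
    by rewrite tr_mul_Fr_Fq // trq_y0 mul0rn mulr0 relTr0 ?(pchar_nat pcharFp).
  by rewrite sumr_const card_expr_fixed // cardF_pn mulnCA expnM dvdn_pred_predX.
have [x trx_neq0] := tr_neq0.
pose w := trq y *+ 2.
have w_neq0 : w != 0 by rewrite /w -mulr_natr mulf_neq0 ?two_neq0.
have w_fixed : w ^+ r = w by rewrite exprDn_pchar ?addr0 ?mulr1n ?relTr_fixed //.
pose c0 := relTr r (2 * s) (x / w).
have c0_fixed : c0 ^+ r = c0.
  by apply: relTr_fixed => //; rewrite -expnM mulnCA -cardF_pn expf_card.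
under eq_bigr do rewrite mulrC.
apply: (sum_chi_mul_eq0 (c0 := c0)) => [c|].
  by rewrite exprDn_pchar // c0_fixed (inj_eq (addIr c0)).
rewrite mulrC tr_mul_Fr_Fq // -/w [c0 * w]mulrC -relTrZ // mulrC divfK //.
by rewrite -relTr_tower ?(pchar_nat pcharFp) // -mulnCA.
Qed.

Lemma sum_chi_Fq c : c != 0 -> c ^+ q = c -> \sum_(y | y ^+ q == y) chi (c * y) = 0.
Proof.
move=> c_neq0 c_fixed; have [x trx_neq0] := tr_neq0.
pose c0 := (x + x ^+ q) / c.
have c0_fixed : c0 ^+ q = c0.
  by rewrite exprMn exprVn exprDq expr_q_qE c_fixed addrC.
apply: (sum_chi_mul_eq0 (c0 := c0)) => [y|].
  by rewrite exprDq c0_fixed (inj_eq (addIr c0)).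
rewrite mulrC divfK // relTrD ?(pchar_nat pcharFp) // -expnM.
by rewrite (relTr_exprXn_char cardF_pn) -mulr2n -mulr_natr mulf_neq0 ?two_neq0.
Qed.

Lemma sum_chi_Fq_units c : c != 0 -> c ^+ q = c ->
  \sum_(y | y ^+ q.-1 == 1) chi (c * y) = -1.
Proof.
move=> c_neq0 c_fixed; have := sum_chi_Fq c_neq0 c_fixed.
rewrite (bigD1 0) /=; last by rewrite expf_eq0 eqxx andbT ltnW.
rewrite mulr0 chi0.
under eq_bigl do rewrite expr_fixed_neq0 //.
by move/eqP; rewrite addrC addr_eq0 => /eqP.
Qed.

(* The norm map x |-> x ^+ q.+1 is (q + 1)-to-one from the units of F onto those of F_q. *)
Lemma sum_chi_norm c : c != 0 -> c ^+ q = c -> \sum_x chi (c * x ^+ q.+1) = - q%:R.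
Proof.
move=> c_neq0 c_fixed.
have ed : (q.-1 * q.+1)%N = #|F|.-1 by rewrite cardF_qq; have := q_gt1; nia.
have [_ card_fiber] := card_unity_roots_expr_fiber ed.
have q1_gt0 : (0 < q.-1)%N by rewrite -ltnS prednK // ltnW.
rewrite (bigD1 0) //= exprS mul0r mulr0 chi0.
rewrite (partition_big (fun x => x ^+ q.+1) (fun y => y ^+ q.-1 == 1)) /=; last first.
  by move=> x x_neq0; rewrite -exprM mulnC ed expr_card_pred.
transitivity (1 + \sum_(y | y ^+ q.-1 == 1) chi (c * y) *+ q.+1).
  congr (_ + _); apply: eq_bigr => y y_unit.
  transitivity (\sum_(x in [pred x | x ^+ q.+1 == y]) chi (c * y)).
    apply: eq_big => [x|x /andP[_ /eqP <-] //]; rewrite !inE; apply: andb_idl => /eqP xy.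
    by move: (unity_root_neq0 q1_gt0 y_unit); rewrite -xy expf_eq0.
  by rewrite sumr_const card_fiber.
by rewrite sumrMnl sum_chi_Fq_units // mulNrn mulrS opprD addNKr.
Qed.

Lemma sum_chi_lin_norm a c : c != 0 -> c ^+ q = c ->
  \sum_x chi (a * x) * chi (c * x ^+ q.+1) =
  chi (- (a ^+ q.+1 / (4%:R * c))) * \sum_x chi (c * x ^+ q.+1).
Proof.
move=> c_neq0 c_fixed.
have two_fixed : (2%:R : F) ^+ q = 2%:R by rewrite -expnM (natr_fixed pcharFp).
pose b := a ^+ q / (2%:R * c).
pose w := a ^+ q.+1 / (4%:R * c).
have b_fixed : b ^+ q = a / (2%:R * c).
  by rewrite exprMn exprVn exprMn expr_q_qE c_fixed two_fixed.
have complete_square x : let u := a * x / 2%:R in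
    c * (x + b) ^+ q.+1 = c * x ^+ q.+1 + (u + u ^+ q) + w.
  rewrite /= exprSr exprDq b_fixed !exprMn exprVn two_fixed /b /w !exprSr.
  by field; rewrite c_neq0 two_neq0 four_neq0.
have chi_shift x : chi (a * x) * chi (c * x ^+ q.+1) = chi (- w) * chi (c * (x + b) ^+ q.+1).
  set u := a * x / 2%:R.
  have chi_uq : chi (u ^+ q) = chi u by rewrite -expnM (addChar_exprXn_char pcharFp cardF_pn).
  have a_x : a * x = u + u by rewrite /u; field; rewrite two_neq0.
  have chi_w : chi (- w) * chi w = 1 by rewrite -chiD addNr chi0.
  rewrite a_x chiD complete_square -/u !chiD chi_uq -[LHS]mulr1 -chi_w.
  by ring.
under eq_bigr do rewrite chi_shift.
by rewrite -mulr_sumr [in RHS](reindex_inj (addIr b)).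
Qed.

Lemma sum_Fr_units_chi w : w ^+ q = w ->
  \sum_(c | (c ^+ r == c) && (c != 0)) chi (c * w) = (if trq w == 0 then r%:R else 0) - 1.
Proof.
move=> w_fixed; rewrite -(sum_chi_Fr w_fixed) [in RHS](bigD1 0) /=; last first.
  by rewrite expf_eq0 eqxx andbT ltnW.
by rewrite mul0r chi0 addrC addrK.
Qed.

Lemma sum_chi_trq_norm0 a :
  r%:R * \sum_(x | trq (x ^+ q.+1) == 0) chi (a * x) =
  \sum_(c | c ^+ r == c) \sum_x chi (a * x) * chi (c * x ^+ q.+1).
Proof.
rewrite exchange_big /= mulr_sumr big_mkcond; apply: eq_bigr => x _.
rewrite -mulr_sumr sum_chi_Fr ?norm_fixed //.
by case: eqP => _; rewrite ?mulr0 // mulrC.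
Qed.

Lemma sum_Fr_units_lin_norm a :
  \sum_(c | (c ^+ r == c) && (c != 0)) \sum_x chi (a * x) * chi (c * x ^+ q.+1) =
  - q%:R * \sum_(c | (c ^+ r == c) && (c != 0)) chi (c * - (a ^+ q.+1 / 4%:R)).
Proof.
rewrite mulr_sumr (reindex_inj invr_inj) /=.
apply: eq_big => [c|c /andP[/eqP c_fixed c_neq0]].
  by rewrite exprVn (inj_eq invr_inj) invr_eq0.
have cq_fixed : c^-1 ^+ q = c^-1 := expr_fixed_expn s c_fixed.
rewrite sum_chi_lin_norm // sum_chi_norm // mulrC; congr (_ * chi _).
by field; rewrite four_neq0 -invr_eq0.
Qed.

Lemma norm_trace_sum a : a != 0 ->
  r%:R * \sum_(x | trq (x ^+ q.+1) == 0) chi (a * x) =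
  - q%:R * ((if trq (a ^+ q.+1) == 0 then r%:R else 0) - 1).
Proof.
move=> a_neq0; rewrite sum_chi_trq_norm0 (bigD1 0) /=; last first.
  by rewrite expf_eq0 eqxx andbT ltnW.
have -> : \sum_x chi (a * x) * chi (0 * x ^+ q.+1) = 0.
  under eq_bigr do rewrite mul0r chi0 mulr1.
  have [x trx_neq0] := tr_neq0.
  by apply: (sum_chi_mul_eq0 (c0 := x / a)); rewrite // mulrC divfK.
set w := - (a ^+ q.+1 / 4%:R).
have w_fixed : w ^+ q = w.
  by rewrite /w exprNn_pchar // exprMn exprVn norm_fixed -expnM (natr_fixed pcharFp).
have trq_w : trq w = - 4%:R^-1 * trq (a ^+ q.+1).
  rewrite -relTrZ; first by rewrite /w mulNr mulrC.
  by rewrite exprNn_pchar // exprVn (natr_fixed pcharFp).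
rewrite add0r sum_Fr_units_lin_norm sum_Fr_units_chi // trq_w mulf_eq0 oppr_eq0.
by rewrite invr_eq0 (negbTE four_neq0).
Qed.

End NormTraceSum.

Theorem mainTheorem10
  (p t s : nat) (F : finFieldType) (zeta : algC) (a : F)
  (hp : prime p) (hodd : odd p) (ht : (0 < t)%N) (hs : (0 < s)%N)
  (hchar : p \in [pchar F])
  (hcard : #|F| = ((p ^ (t * s)) ^ 2)%N)
  (hzeta : p.-primitive_root zeta)
  (ha : a != 0) :
  let r := (p ^ t)%N in
  let q := (r ^ s)%N in
  let T := q.+1 in
  let P := \sum_(x : F | relTr r s (x ^+ T) == 0) addChar p (2 * (t * s)) zeta (a * x) in
  (relTr r s (a ^+ T) == 0 -> P = - ((q%:R / r%:R) * (r%:R - 1))) /\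
  (relTr r s (a ^+ T) != 0 -> P = q%:R / r%:R).
Proof.
move=> r q T P.
have r_neq0 : (r%:R : algC) != 0 by rewrite pnatr_eq0 expn_eq0 (gtn_eqF (prime_gt0 hp)).
have rP := norm_trace_sum hodd ht hs hchar hcard hzeta ha; rewrite -/P in rP.
split=> [trq0 | trq_neq0]; apply: (mulfI r_neq0); rewrite rP.
  by rewrite trq0; field.
by rewrite (negbTE trq_neq0); field.
Qed.
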